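(* For any $x,y\in\mathbb{R}^n$, $$\big\langle x-y,\ \mathbb{E}_{\mathbb{S}}[(a_{i^*}^Ty-b_{i^*})^+a_{i^*}]\big\rangle=\langle x-y,\nabla f(y)\rangle\le f(x)-f(y)\le\frac{\mu_2}{2}d(x,P)^2-\frac{\mu_1}{2}d(y,P)^2,$$ where in the expectation $i^*$ is selected at the point $y$.
   Context: Let $A\in\mathbb{R}^{m\times n}$ have rows $a_1^T,\dots,a_m^T$ with $\|a_i\|_2=1$, and $b\in\mathbb{R}^m$; assume $Ax\le b$ is consistent and let $P=\{x:Ax\le b\}$, $\mathcal{P}(x)$ the Euclidean projection onto $P$, $d(x,P)=\|x-\mathcal{P}(x)\|$, $t^+=\max\{t,0\}$. Fix an integer $1\le\beta\le m$. Sampling distribution $\mathbb{S}$ at a point $u$: $\tau\subseteq\{1,\dots,m\}$ with $|\tau|=\beta$ uniformly at random, and $i^*\in\tau$ maximizing $(a_i^Tu-b_i)^+$ over $\tau$; $\mathbb{E}_{\mathbb{S}}$ is expectation over $\tau$. $f(u)=\mathbb{E}_{\mathbb{S}}[\frac12|(a_{i^*}^Tu-b_{i^*})^+|^2]$ and $\nabla f(u):=\mathbb{E}_{\mathbb{S}}[(a_{i^*}^Tu-b_{i^*})^+a_{i^*}]$ (with $i^*$ selected at $u$). $L>0$ is a Hoffman constant ($d(u,P)^2\le L^2\|(Au-b)^+\|^2$ for all $u$); $\mu_1=\frac1{mL^2}$, $\mu_2=\min\{1,\frac{\beta}{m}\lambda_{\max}(A^TA)\}$. *)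

From HB Require Import structures.
From mathcomp Require Import all_boot all_order all_algebra.
From mathcomp Require Import classical_sets reals.
Set Implicit Arguments. Unset Strict Implicit. Unset Printing Implicit Defensive.
Import Order.TTheory GRing.Theory Num.Theory.
Local Open Scope ring_scope.
Local Open Scope classical_set_scope.

Section Defs.
Variable R : realType.

Definition inner (n : nat) (u v : 'cV[R]_n) : R := \sum_(j < n) u j 0 * v j 0.
Definition norm2 (n : nat) (u : 'cV[R]_n) : R := Num.sqrt (inner u u).

Definition posp (t : R) : R := Num.max t 0.

Definition polyhedron (m n : nat) (A : 'M[R]_(m, n)) (b : 'cV[R]_m) : set 'cV[R]_n :=
  [set z | forall i : 'I_m, (A *m z) i 0 <= b i 0].

Definition distP (m n : nat) (A : 'M[R]_(m, n)) (b : 'cV[R]_m) (x : 'cV[R]_n) : R :=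
  inf [set norm2 (x - z) | z in polyhedron A b].

Definition resid (m n : nat) (A : 'M[R]_(m, n)) (b : 'cV[R]_m) (u : 'cV[R]_n)
  (i : 'I_m) : R := posp ((A *m u) i 0 - b i 0).

Definition residv (m n : nat) (A : 'M[R]_(m, n)) (b : 'cV[R]_m) (u : 'cV[R]_n)
  : 'cV[R]_m := \col_i resid A b u i.

(* sample space of the sampling distribution S: subsets of size beta, uniform *)
Definition samples (m beta : nat) : {set {set 'I_m}} :=
  [set tau : {set 'I_m} | #|tau| == beta].

Definition ExpS (V : lmodType R) (m beta : nat) (g : {set 'I_m} -> V) : V :=
  (#|samples m beta|%:R)^-1 *: \sum_(tau in samples m beta) g tau.

(* max over tau of (a_i^T u - b_i)^+ , i.e. the value at i^* *)
Definition maxres (m n : nat) (A : 'M[R]_(m, n)) (b : 'cV[R]_m) (u : 'cV[R]_n)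
  (tau : {set 'I_m}) : R := \big[Num.max/0]_(i in tau) resid A b u i.

Definition fS (m n beta : nat) (A : 'M[R]_(m, n)) (b : 'cV[R]_m) (u : 'cV[R]_n) : R :=
  @ExpS R^o m beta (fun tau => (maxres A b u tau) ^+ 2 / 2).

(* sel is a valid selection rule for i^* at the point u *)
Definition is_selection (m n beta : nat) (A : 'M[R]_(m, n)) (b : 'cV[R]_m)
  (u : 'cV[R]_n) (sel : {set 'I_m} -> 'I_m) : Prop :=
  forall tau : {set 'I_m}, #|tau| = beta ->
    sel tau \in tau /\ forall j, j \in tau -> resid A b u j <= resid A b u (sel tau).

Definition gradS (m n beta : nat) (A : 'M[R]_(m, n)) (b : 'cV[R]_m) (u : 'cV[R]_n)
  (sel : {set 'I_m} -> 'I_m) : 'cV[R]_n :=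
  ExpS beta (fun tau => resid A b u (sel tau) *: (row (sel tau) A)^T).

Definition lambda_max (n : nat) (M : 'M[R]_n) : R := sup [set a | eigenvalue M a].

End Defs.

(* Write r_i(u) = (a_i^T u - b_i)^+, so that f averages (max_{i in tau} r_i)^2 / 2 over
   the beta-subsets tau.  The gradient inequality holds sample by sample: t |-> (t^+)^2 / 2
   is convex with derivative t^+, and the selected index attains the maximum at y.
   Averaging over tau counts every index with weight beta / m.  Hence at y, from
   max^2 >= (1/beta) sum_{i in tau} r_i^2, we get f(y) >= ||r(y)||^2 / (2m), which the
   Hoffman bound turns into (mu1/2) d(y,P)^2.  At x, for any p in P, r_i(x) <= |a_i^T (x - p)|,
   and max^2 is bounded both by ||x - p||^2 (unit rows) and by sum_{i in tau} (a_i^T (x - p))^2,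
   whose average is (beta/m) ||A (x - p)||^2 <= (beta/m) lambda_max(A^T A) ||x - p||^2. *)

From HB Require Import structures.
From mathcomp Require Import all_boot all_order all_algebra perm.
From mathcomp Require Import boolp classical_sets reals topology normedtype derive.
From mathcomp Require Import ring lra.
Import Order.TTheory GRing.Theory Num.Theory numFieldNormedType.Exports.
Set Implicit Arguments. Unset Strict Implicit. Unset Printing Implicit Defensive.
Local Open Scope ring_scope.
Local Open Scope classical_set_scope.

Section RayleighQuotient.
Variable R : realType.
Implicit Types (n : nat).

Lemma formE n (M : 'M[R]_n) u v : form idfun M u v = (u *m M *m v^T) 0 0.
Proof. by rewrite /form map_mx_id. Qed.

Lemma form1E n (u v : 'rV[R]_n) : form idfun 1%:M u v = \sum_i u 0 i * v 0 i.
Proof. by rewrite formE mulmx1 mxE; apply: eq_bigr => i _; rewrite mxE. Qed.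

Lemma form1_ge0 n (u : 'rV[R]_n) : 0 <= form idfun 1%:M u u.
Proof. by rewrite form1E sumr_ge0 // => i _; rewrite -expr2 sqr_ge0. Qed.

Lemma form1_eq0 n (u : 'rV[R]_n) : (form idfun 1%:M u u == 0) = (u == 0).
Proof.
apply/idP/eqP => [|->]; last by rewrite form0l.
rewrite form1E psumr_eq0 => [/allP u0|i _]; last by rewrite -expr2 sqr_ge0.
apply/rowP => i; rewrite mxE; have /implyP := u0 i (mem_index_enum i).
by rewrite mulf_eq0 orbb => /(_ isT) /eqP.
Qed.

Lemma formC_sym n (M : 'M[R]_n) u v : M^T = M -> form idfun M u v = form idfun M v u.
Proof.
move=> MT; rewrite !formE -(trmxK (u *m M *m v^T)) [LHS]mxE.
by rewrite !trmx_mul trmxK MT mulmxA.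
Qed.

Lemma form_scalar_mxB n (M : 'M[R]_n) (a : R) u v :
  form idfun (a%:M - M) u v = a * form idfun 1%:M u v - form idfun M u v.
Proof.
by rewrite !formE mulmxBr mulmxBl mul_mx_scalar -scalemxAl mulmx1 !mxE.
Qed.

Lemma form_continuous n (M : 'M[R]_n) : continuous (fun u => form idfun M u u).
Proof.
have -> : (fun u => form idfun M u u) = fun u => \sum_j (\sum_i u 0 i * M i j) * u 0 j.
  by apply/funext => u; rewrite formE mxE; apply: eq_bigr => j _; rewrite !mxE.
apply: continuous_big => [|j _]; first exact: add_continuous.
move=> u; apply: continuousM; last exact: coord_continuous.
apply: continuous_big => [|i _ {}u]; first exact: add_continuous.
by apply: continuousM; [exact: coord_continuous | exact: cst_continuous].
Qed.

Lemma psd_form_eq0 n (M : 'M[R]_n) v : M^T = M ->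
  (forall u, 0 <= form idfun M u u) -> form idfun M v v = 0 -> v *m M = 0.
Proof.
move=> MT M_psd Mvv; apply/eqP; rewrite -form1_eq0; set w := v *m M.
have Mvw : form idfun M v w = form idfun 1%:M w w by rewrite !formE mulmx1.
set c := form idfun 1%:M w w; set d := form idfun M w w.
have c_ge0 : 0 <= c := form1_ge0 w.
have d_ge0 : 0 <= d := M_psd w.
pose t := c / (d + 1).
have tE : t * (d + 1) = c by rewrite mulfVK // gt_eqF // ltr_wpDl.
have t_ge0 : 0 <= t by rewrite divr_ge0 // addr_ge0.
(* as [t d = c - t], positivity of the form at [v - t w] reads [0 <= - t (c + t)] *)
have := M_psd (v - t *: w).
rewrite formDl !formDr !formNl !formNr !formZl !formZr Mvv (formC_sym w v MT) Mvw /=.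
rewrite -/c -/d => form_ge0; have ttE := congr1 (fun z => t * z) tE.
have tc_ge0 := mulr_ge0 t_ge0 c_ge0; have : t ^+ 2 <= 0 by nra.
by rewrite le_eqVlt ltNge sqr_ge0 orbF sqrf_eq0 -tE => /eqP ->; rewrite mul0r.
Qed.

Lemma unit_sphere_compact n : compact [set u : 'rV[R]_n | form idfun 1%:M u u = 1].
Proof.
apply: bounded_closed_compact.
  exists 1; split; first exact: num_real.
  move=> K K_gt1 u /= u1; apply/ltW/(le_lt_trans _ K_gt1).
  rewrite /Num.norm /= mx_normrE; apply: bigmax_le => // -[i j] _ /=.
  rewrite (ord1 i) -(expr_le1 (n := 2)) // ?real_normK ?num_real //.
  rewrite -u1 form1E (bigD1 j) //= expr2 lerDl sumr_ge0 // => k _.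
  by rewrite -expr2 sqr_ge0.
apply: (@preimage_closed _ _ (fun u : 'rV[R]_n => form idfun 1%:M u u) [set x | x = 1]).
  by move=> u _; exact: form_continuous.
exact: closed_eq.
Qed.

Lemma form1_delta n (j : 'I_n) :
  form idfun 1%:M (delta_mx 0 j : 'rV[R]_n) (delta_mx 0 j) = 1.
Proof.
rewrite form1E (bigD1 j) //= big1 ?addr0; first by rewrite mxE !eqxx mulr1.
by move=> i /negbTE ij; rewrite mxE ij andbF mul0r.
Qed.

(* A maximiser v of the form on the (compact) unit sphere makes [lam%:M - M] positive
   semidefinite with v in its kernel, so v is an eigenvector for the maximum [lam]. *)
Lemma sym_rayleigh_eigenvalue n (M : 'M[R]_n.+1) : M^T = M ->
  exists2 lam, eigenvalue M lam &
    forall u, form idfun M u u <= lam * form idfun 1%:M u u.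
Proof.
move=> MT; set S := [set u : 'rV[R]_n.+1 | form idfun 1%:M u u = 1].
have S_neq0 : S !=set0 by exists (delta_mx 0 0); exact: form1_delta.
have M_cont := continuous_subspaceT (@form_continuous n.+1 M) (A := S).
have [v /set_mem v1 v_max] := EVT_max_rV S_neq0 (@unit_sphere_compact n.+1) M_cont.
set lam := form idfun M v v.
have rayleigh u : form idfun M u u <= lam * form idfun 1%:M u u.
  have [->|u_neq0] := eqVneq u 0; first by rewrite !form0l mulr0.
  have u_gt0 : 0 < form idfun 1%:M u u by rewrite lt_def form1_eq0 u_neq0 form1_ge0.
  pose s := (Num.sqrt (form idfun 1%:M u u))^-1.
  have s2u : s ^+ 2 * form idfun 1%:M u u = 1.
    by rewrite exprVn sqr_sqrtr ?ltW // mulVf // gt_eqF.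
  have s2_gt0 : 0 < s ^+ 2 by rewrite exprn_gt0 // invr_gt0 sqrtr_gt0.
  have Ssu : S (s *: u) by rewrite /S /= formZl formZr /= mulrA -expr2 s2u.
  have := v_max _ (mem_set Ssu); rewrite formZl formZr /= mulrA -expr2 -/lam.
  by move=> max_su; rewrite -(ler_pM2l s2_gt0) [leRHS]mulrCA s2u mulr1.
exists lam => //; apply/eigenvalueP; exists v; last first.
  by apply: contra_eqN v1 => /eqP ->; rewrite form0l eq_sym oner_eq0.
have /eqP : v *m (lam%:M - M) = 0.
  apply: psd_form_eq0 => [|u|]; rewrite ?form_scalar_mxB ?v1 ?mulr1 ?subrr ?subr_ge0 //.
  by rewrite linearB /= tr_scalar_mx MT.
by rewrite mulmxBr mul_mx_scalar subr_eq0 => /eqP <-.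
Qed.

Lemma lambda_max_rayleigh n (M : 'M[R]_n) u : M^T = M ->
  form idfun M u u <= lambda_max M * form idfun 1%:M u u.
Proof.
case: n M u => [|n] M u MT; first by rewrite (thinmx0 u) !form0l mulr0.
have [lam lam_eigen rayleigh] := sym_rayleigh_eigenvalue MT.
suff -> : lambda_max M = lam by [].
have eigen_le a : eigenvalue M a -> a <= lam.
  move=> /eigenvalueP[v vM v_neq0].
  have v_gt0 : 0 < form idfun 1%:M v v by rewrite lt_def form1_eq0 v_neq0 form1_ge0.
  rewrite -(ler_pM2r v_gt0); apply: le_trans (rayleigh v).
  by rewrite !formE vM -scalemxAl mulmx1 [leRHS]mxE.
apply/le_anti/andP; split; first by apply: ge_sup; [exists lam | exact: eigen_le].
by apply: sup_upper_bound => //; split; [exists lam | exists lam => a /eigen_le].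
Qed.

Lemma lambda_max_ge0 n (M : 'M[R]_n) : M^T = M ->
  (forall u, 0 <= form idfun M u u) -> 0 <= lambda_max M.
Proof.
case: n M => [|n] M MT M_psd.
  rewrite /lambda_max (_ : [set a | eigenvalue M a] = set0) ?sup0 //.
  by apply/seteqP; split => // a /eigenvalueP[v _]; rewrite thinmx0 eqxx.
have := lambda_max_rayleigh (delta_mx 0 0) MT; rewrite form1_delta mulr1.
exact: le_trans.
Qed.

End RayleighQuotient.

Section InnerProduct.
Variable R : realType.
Implicit Types (m n : nat).

Lemma inner_formE n (u v : 'cV[R]_n) : inner u v = form idfun 1%:M u^T v^T.
Proof. by rewrite form1E; apply: eq_bigr => i _; rewrite !mxE. Qed.

Lemma inner_ge0 n (u : 'cV[R]_n) : 0 <= inner u u.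
Proof. by rewrite inner_formE form1_ge0. Qed.

Lemma innerZr n (u v : 'cV[R]_n) a : inner u (a *: v) = a * inner u v.
Proof. by rewrite !inner_formE linearZ formZr. Qed.

Lemma inner_sumr n (I : finType) (P : pred I) (u : 'cV[R]_n) (F : I -> 'cV[R]_n) :
  inner u (\sum_(t | P t) F t) = \sum_(t | P t) inner u (F t).
Proof.
rewrite /inner; under eq_bigr do rewrite summxE mulr_sumr.
exact: exchange_big.
Qed.

Lemma inner_row_trmx m n (A : 'M[R]_(m, n)) (w : 'cV[R]_n) i :
  inner w (row i A)^T = (A *m w) i 0.
Proof. by rewrite /inner mxE; apply: eq_bigr => j _; rewrite !mxE mulrC. Qed.

Lemma inner_unit_sqr_le n (u a : 'cV[R]_n) :
  inner a a = 1 -> inner u a ^+ 2 <= inner u u.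
Proof.
move=> a1; have := form1_ge0 (u^T - inner u a *: a^T).
rewrite formDl !formDr !formNl !formNr !formZl !formZr /=.
rewrite (formC_sym a^T u^T (trmx1 _ _)) -!inner_formE a1; lra.
Qed.

Lemma trmx_mul_trmx m n (A : 'M[R]_(m, n)) : (A^T *m A)^T = A^T *m A.
Proof. by rewrite trmx_mul trmxK. Qed.

Lemma inner_mulmx_formE m n (A : 'M[R]_(m, n)) (w : 'cV[R]_n) :
  inner (A *m w) (A *m w) = form idfun (A^T *m A) w^T w^T.
Proof. by rewrite inner_formE !formE mulmx1 !trmx_mul trmxK !mulmxA. Qed.

Lemma inner_mulmx_le_lambda_max m n (A : 'M[R]_(m, n)) (w : 'cV[R]_n) :
  inner (A *m w) (A *m w) <= lambda_max (A^T *m A) * inner w w.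
Proof.
by rewrite inner_mulmx_formE inner_formE lambda_max_rayleigh // trmx_mul_trmx.
Qed.

End InnerProduct.

Section UniformSubsets.
Variable R : realType.

Lemma sum_ksubsets_sum (T : finType) k (g : T -> R) :
  #|T|%:R * \sum_(A in [set A : {set T} | #|A| == k]%SET) \sum_(i in A) g i
  = k%:R * #|[set A : {set T} | #|A| == k]%SET|%:R * \sum_i g i.
Proof.
set S := [set A : {set T} | #|A| == k]%SET.
pose c i := #|[set A in S | i \in A]|.
have exchange (h : T -> R) : \sum_(A in S) \sum_(i in A) h i = \sum_i (c i)%:R * h i.
  under eq_bigr do rewrite big_mkcond /=.
  rewrite exchange_big /=; apply: eq_bigr => i _; rewrite -big_mkcondr /=.
  rewrite (eq_bigl [in [set A in S | i \in A]]) => [|A]; last by rewrite !inE.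
  by rewrite sumr_const mulr_natl.
(* conjugating by a transposition exchanges the subsets containing [i] and [j] *)
have c_le i j : (c i <= c j)%N.
  rewrite /c -(card_imset _ (imset_inj (@perm_inj _ (tperm i j)))).
  apply: subset_leq_card; apply/fintype.subsetP => _ /imsetP[A + ->].
  rewrite !inE => /andP[/eqP cardA iA].
  rewrite card_imset ?cardA ?eqxx /=; last exact: perm_inj.
  by apply/imsetP; exists i => //; rewrite tpermL.
have c_const i j : c i = c j by apply/anti_leq; rewrite !c_le.
have cardT_c i : #|T|%:R * (c i)%:R = k%:R * #|S|%:R :> R.
  have -> : #|T|%:R * (c i)%:R = \sum_(A in S) \sum_(j in A) (1 : R).
    rewrite exchange; under eq_bigr do rewrite mulr1 (c_const _ i).
    by rewrite sumr_const mulr_natl.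
  rewrite (eq_bigr (fun=> k%:R)) ?sumr_const ?mulr_natr // => A.
  by rewrite inE => /eqP <-; rewrite sumr_const.
rewrite exchange mulr_sumr; under eq_bigr do rewrite mulrA cardT_c.
by rewrite -mulr_sumr.
Qed.

Lemma card_samples_gt0 m beta : (beta <= m)%N -> (0 < #|samples m beta|)%N.
Proof. by move=> le_beta_m; rewrite card_draws card_ord bin_gt0. Qed.

Lemma ExpS_regE m beta (g : {set 'I_m} -> R) :
  @ExpS _ R^o m beta g = #|samples m beta|%:R^-1 * \sum_(tau in samples m beta) g tau.
Proof. by []. Qed.

Lemma ExpS_le m beta (g h : {set 'I_m} -> R) :
  (forall tau : {set 'I_m}, #|tau| = beta -> g tau <= h tau) ->
  @ExpS _ R^o m beta g <= @ExpS _ R^o m beta h.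
Proof.
move=> le_gh; rewrite ler_wpM2l ?invr_ge0 // ler_sum // => tau.
by rewrite inE => /eqP /le_gh.
Qed.

Lemma ExpS_cst m beta (c : R) : (beta <= m)%N -> @ExpS _ R^o m beta (fun=> c) = c.
Proof.
move=> /card_samples_gt0 N_gt0.
by rewrite ExpS_regE sumr_const -[c *+ _]mulr_natl mulKf // pnatr_eq0 -lt0n.
Qed.

Lemma ExpSB (V : lmodType R) m beta (g h : {set 'I_m} -> V) :
  ExpS beta g - ExpS beta h = ExpS beta (fun tau => g tau - h tau).
Proof. by rewrite /ExpS -scalerBr sumrB. Qed.

Lemma inner_ExpS n m beta (u : 'cV[R]_n) (F : {set 'I_m} -> 'cV[R]_n) :
  inner u (ExpS beta F) = @ExpS _ R^o m beta (fun tau => inner u (F tau)).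
Proof. by rewrite /ExpS innerZr inner_sumr. Qed.

Lemma ExpS_sum_subset m beta (g : 'I_m -> R) : (0 < m)%N -> (beta <= m)%N ->
  @ExpS _ R^o m beta (fun tau => \sum_(i in tau) g i) = beta%:R / m%:R * \sum_i g i.
Proof.
move=> m_gt0 /card_samples_gt0 N_gt0.
have m_neq0 : m%:R != 0 :> R by rewrite pnatr_eq0 -lt0n.
have N_neq0 : #|samples m beta|%:R != 0 :> R by rewrite pnatr_eq0 -lt0n.
have := sum_ksubsets_sum beta g; rewrite card_ord -/(samples m beta) => sumE.
apply: (mulfI m_neq0); rewrite ExpS_regE mulrCA sumE.
by field; rewrite m_neq0 N_neq0.
Qed.

End UniformSubsets.

Section ScalarBounds.
Variable R : realType.

Lemma posp_ge0 (t : R) : 0 <= posp t.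
Proof. by rewrite le_max lexx orbT. Qed.

Lemma posp_sqr_subgrad (s t : R) :
  posp t * (s - t) <= posp s ^+ 2 / 2 - posp t ^+ 2 / 2.
Proof.
rewrite /posp; have [t_le0|t_gt0] := lerP t 0.
  by rewrite mul0r expr0n /= mul0r subr0 divr_ge0 ?sqr_ge0.
have [s_le0|s_gt0] := lerP s 0; last by have := sqr_ge0 (s - t); nra.
by rewrite expr0n /= mul0r; nra.
Qed.

Lemma sqr_bigmax_le (I : finType) (A : {set I}) (F : I -> R) c :
  (forall i, 0 <= F i) -> 0 <= c -> (forall i, i \in A -> F i ^+ 2 <= c) ->
  (\big[Num.max/0]_(i in A) F i) ^+ 2 <= c.
Proof.
move=> F_ge0 c_ge0 F_le; rewrite -(sqr_sqrtr c_ge0).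
apply: lerXn2r; rewrite ?nnegrE ?bigmax_ge_id ?sqrtr_ge0 //.
apply: bigmax_le => [|i iA]; first exact: sqrtr_ge0.
by rewrite -(ger0_norm (F_ge0 i)) -sqrtr_sqr ler_sqrt // F_le.
Qed.

Lemma sqr_bigmax_le_sum (I : finType) (A : {set I}) (F : I -> R) :
  (forall i, 0 <= F i) ->
  (\big[Num.max/0]_(i in A) F i) ^+ 2 <= \sum_(i in A) F i ^+ 2.
Proof.
have F2_ge0 i : 0 <= F i ^+ 2 by exact: sqr_ge0.
move=> F_ge0; apply: sqr_bigmax_le => // [|i iA]; first exact: sumr_ge0.
by rewrite (bigD1 i) //= lerDl sumr_ge0.
Qed.

Lemma sum_sqr_le_card_bigmax (I : finType) (A : {set I}) (F : I -> R) :
  (forall i, 0 <= F i) ->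
  \sum_(i in A) F i ^+ 2 <= #|A|%:R * (\big[Num.max/0]_(i in A) F i) ^+ 2.
Proof.
move=> F_ge0; rewrite mulr_natl -sumr_const; apply: ler_sum => i iA.
by apply: lerXn2r; rewrite ?nnegrE ?bigmax_ge_id ?le_bigmax_cond.
Qed.

Lemma le_mul_sqr_inf (T : Type) (P : set T) (g : T -> R) (c v : R) :
  P !=set0 -> 0 <= c -> (forall z, P z -> 0 <= g z) ->
  (forall z, P z -> v <= c * g z ^+ 2) -> v <= c * inf (g @` P) ^+ 2.
Proof.
move=> [z0 Pz0] c_ge0 g_ge0 v_le.
have [v_le0|v_gt0] := lerP v 0; first by rewrite (le_trans v_le0) // mulr_ge0 ?sqr_ge0.
have c_gt0 : 0 < c.
  by rewrite lt_def c_ge0 andbT; apply: contraTneq (v_le z0 Pz0) => ->; rewrite mul0r -ltNge.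
have sqrt_le : Num.sqrt (v / c) <= inf (g @` P).
  apply: lb_le_inf => [|_ [z Pz <-]]; first by exists (g z0), z0.
  rewrite -(ger0_norm (g_ge0 z Pz)) -sqrtr_sqr ler_sqrt ?sqr_ge0 // ler_pdivrMr // mulrC.
  exact: v_le.
rewrite mulrC -ler_pdivrMr // -(sqr_sqrtr (ltW (divr_gt0 v_gt0 c_gt0))).
by apply: lerXn2r; rewrite ?nnegrE ?sqrtr_ge0 ?(le_trans (sqrtr_ge0 _) sqrt_le).
Qed.

End ScalarBounds.

Section ResidualFunction.
Variables (R : realType) (m n beta : nat) (A : 'M[R]_(m, n)) (b : 'cV[R]_m).
Hypothesis beta_range : (0 < beta <= m)%N.
Hypothesis unit_rows : forall i, norm2 (row i A)^T = 1.

Let le_beta_m : (beta <= m)%N. Proof. by case/andP: beta_range. Qed.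
Let m_gt0 : (0 < m)%N. Proof. by case/andP: beta_range => /leq_trans; apply. Qed.

Lemma resid_ge0 u i : 0 <= resid A b u i.
Proof. exact: posp_ge0. Qed.

Lemma maxres_selection u sel (tau : {set 'I_m}) :
  is_selection beta A b u sel -> #|tau| = beta ->
  maxres A b u tau = resid A b u (sel tau).
Proof.
move=> sel_u /sel_u[sel_in sel_max]; apply/le_anti.
by rewrite bigmax_le ?resid_ge0 // le_bigmax_cond.
Qed.

Lemma sqr_resid_le_feasible x p i : polyhedron A b p ->
  resid A b x i ^+ 2 <= (A *m (x - p)) i 0 ^+ 2.
Proof.
move=> /(_ i) Ap_le; rewrite -[leRHS]real_normK ?num_real //.
apply: lerXn2r; rewrite ?nnegrE ?resid_ge0 // /resid ge_max normr_ge0 andbT.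
apply: le_trans (ler_norm _); rewrite mulmxBr.
have -> : (A *m x - A *m p) i 0 = (A *m x) i 0 - (A *m p) i 0 by rewrite !mxE.
by rewrite lerD2l lerN2.
Qed.

Lemma inner_gradS_le x y sel : is_selection beta A b y sel ->
  inner (x - y) (gradS beta A b y sel) <= fS beta A b x - fS beta A b y.
Proof.
move=> sel_y; rewrite inner_ExpS /fS ExpSB; apply: ExpS_le => tau tau_card.
have [sel_in _] := sel_y tau tau_card.
rewrite innerZr inner_row_trmx (maxres_selection sel_y tau_card).
set i := sel tau; set s := (A *m x) i 0 - b i 0; set t := (A *m y) i 0 - b i 0.
have -> : (A *m (x - y)) i 0 = s - t by rewrite /s /t mulmxBr !mxE; ring.
apply: le_trans (posp_sqr_subgrad s t) _; rewrite lerD2r ler_pM2r ?invr_gt0 //.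
apply: lerXn2r; rewrite ?nnegrE ?posp_ge0 ?bigmax_ge_id //.
exact: (le_bigmax_cond _ (resid A b x) sel_in).
Qed.

Lemma sqr_residv_le_fS y : norm2 (residv A b y) ^+ 2 / (2 * m%:R) <= fS beta A b y.
Proof.
have beta_gt0 : (0 < beta)%N by case/andP: beta_range.
have -> : norm2 (residv A b y) ^+ 2 / (2 * m%:R)
    = beta%:R / m%:R * \sum_i resid A b y i ^+ 2 / (2 * beta%:R) :> R.
  rewrite -mulr_suml sqr_sqrtr ?inner_ge0 // /inner.
  under eq_bigr do rewrite !mxE -expr2.
  by field; rewrite !pnatr_eq0 -!lt0n m_gt0 beta_gt0.
rewrite -ExpS_sum_subset //; apply: ExpS_le => tau tau_card.
rewrite -mulr_suml ler_pdivrMr ?mulr_gt0 ?ltr0n //.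
apply: le_trans (sum_sqr_le_card_bigmax _ (@resid_ge0 y)) _.
by rewrite tau_card -/(maxres A b y tau) -mulrA mulKf ?pnatr_eq0 -?lt0n // mulrC.
Qed.

Lemma fS_le_sqr_dist x p : polyhedron A b p ->
  fS beta A b x <= inner (x - p) (x - p) / 2.
Proof.
move=> p_feas; rewrite -(ExpS_cst (inner (x - p) (x - p) / 2) le_beta_m).
apply: ExpS_le => tau _; rewrite ler_pM2r ?invr_gt0 ?ltr0n //.
apply: sqr_bigmax_le => [i||i _]; rewrite ?resid_ge0 ?inner_ge0 //.
apply: le_trans (sqr_resid_le_feasible x i p_feas) _.
rewrite -inner_row_trmx inner_unit_sqr_le //.
by rewrite -[LHS]sqr_sqrtr ?inner_ge0 // -/(norm2 _) unit_rows expr1n.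
Qed.

Lemma fS_le_lambda_max x p : polyhedron A b p ->
  fS beta A b x <= beta%:R / m%:R * lambda_max (A^T *m A) * (inner (x - p) (x - p) / 2).
Proof.
move=> p_feas; set w := x - p.
apply: (@le_trans _ _ (@ExpS _ R^o m beta
    (fun tau => \sum_(i in tau) (A *m w) i 0 ^+ 2 / 2))).
  apply: ExpS_le => tau _; rewrite -mulr_suml ler_pM2r ?invr_gt0 ?ltr0n //.
  apply: le_trans (sqr_bigmax_le_sum _ (@resid_ge0 x)) _.
  by apply: ler_sum => i _; exact: sqr_resid_le_feasible.
rewrite ExpS_sum_subset // -mulr_suml -[leRHS]mulrA ler_wpM2l ?divr_ge0 //.
rewrite [leRHS]mulrA ler_wpM2r ?invr_ge0 //.
have -> : \sum_i (A *m w) i 0 ^+ 2 = inner (A *m w) (A *m w).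
  by apply: eq_bigr => i _; rewrite expr2.
exact: inner_mulmx_le_lambda_max.
Qed.

Lemma fS_le_distP x : (exists p, polyhedron A b p) ->
  fS beta A b x <=
    Num.min 1 (beta%:R / m%:R * lambda_max (A^T *m A)) / 2 * distP A b x ^+ 2.
Proof.
move=> [p0 p0_feas].
have AA_psd u : 0 <= form idfun (A^T *m A) u u.
  by rewrite -[u]trmxK -inner_mulmx_formE inner_ge0.
have lam_ge0 := lambda_max_ge0 (trmx_mul_trmx A) AA_psd.
apply: le_mul_sqr_inf => [|||p p_feas]; first by exists p0.
- by rewrite divr_ge0 // le_min ler01 mulr_ge0 ?divr_ge0.
- by move=> p _; exact: sqrtr_ge0.
rewrite sqr_sqrtr ?inner_ge0 // -[_ / 2 * _]mulrA minr_pMl ?mulr_ge0 ?invr_ge0 ?inner_ge0 //.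
by rewrite le_min mul1r mulrC fS_le_sqr_dist //= fS_le_lambda_max.
Qed.

Lemma sqr_distP_le_fS y L : 0 < L ->
  distP A b y ^+ 2 <= L ^+ 2 * norm2 (residv A b y) ^+ 2 ->
  (m%:R * L ^+ 2)^-1 / 2 * distP A b y ^+ 2 <= fS beta A b y.
Proof.
move=> L_gt0 hoffman; apply: le_trans (sqr_residv_le_fS y).
apply: le_trans (ler_wpM2l _ hoffman) _.
  by rewrite divr_ge0 ?invr_ge0 ?mulr_ge0 ?ler0n ?ltW.
rewrite le_eqVlt; apply/predU1l; field.
by rewrite pnatr_eq0 -lt0n m_gt0 gt_eqF.
Qed.

End ResidualFunction.

Theorem lemma7 (R : realType) (m n beta : nat)
  (A : 'M[R]_(m, n)) (b : 'cV[R]_m) (L : R)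
  (hrows : forall i : 'I_m, norm2 (row i A)^T = 1)
  (hcons : exists x0 : 'cV[R]_n, polyhedron A b x0)
  (hbeta : (1 <= beta <= m)%N)
  (hL : 0 < L)
  (hHoff : forall u : 'cV[R]_n, distP A b u ^+ 2 <= L ^+ 2 * norm2 (residv A b u) ^+ 2)
  (x y : 'cV[R]_n) (sel : {set 'I_m} -> 'I_m)
  (hsel : is_selection beta A b y sel) :
  let mu1 := (m%:R * L ^+ 2)^-1 in
  let mu2 := Num.min 1 (beta%:R / m%:R * lambda_max (A^T *m A)) in
  inner (x - y) (ExpS beta (fun tau => resid A b y (sel tau) *: (row (sel tau) A)^T))
    = inner (x - y) (gradS beta A b y sel)
  /\ inner (x - y) (gradS beta A b y sel) <= fS beta A b x - fS beta A b y
  /\ fS beta A b x - fS beta A b y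
       <= mu2 / 2 * distP A b x ^+ 2 - mu1 / 2 * distP A b y ^+ 2.
Proof.
move=> mu1 mu2; split=> //; split; first exact: inner_gradS_le.
apply: lerB; first exact: fS_le_distP.
exact: sqr_distP_le_fS.
Qed.
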